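(* Fix $a\in\mathbb{C}\setminus\{0\}$ and let $U\subset\mathbb{C}\setminus\{0\}$ be a domain on which $1-ax\neq 0$ (and on which the functions below are nowhere vanishing). Define \[ f_1(x)=\frac{ax}{1-ax},\qquad f_2(x)=\frac{1}{1-ax},\qquad x\in U. \] Then $\mathcal{A}[f_1]=f_2$ and $\mathcal{A}[f_2]=f_1$ on $U$, and $f_1\not\equiv f_2$; that is, $(f_1,f_2)$ is a nondegenerate period-$2$ orbit of $\mathcal{A}$.
   Context: For a complex-differentiable, nowhere-vanishing function $f$ on a domain $U\subset\mathbb{C}\setminus\{0\}$, the dual logarithmic derivative operator is $\mathcal{A}[f](x)=\dfrac{\mathrm{d}\ln f(x)}{\mathrm{d}\ln x}=\dfrac{x f'(x)}{f(x)}$ (for any fixed analytic branches of the logarithms). A pair $(f_1,f_2)$ of holomorphic nowhere-vanishing functions on $U$ is a period-$2$ orbit of $\mathcal{A}$ if $\mathcal{A}[f_1]=f_2$ and $\mathcal{A}[f_2]=f_1$; it is nondegenerate if $f_1\not\equiv f_2$. *)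

From mathcomp Require Import all_boot all_order all_algebra.
From mathcomp Require Import all_classical all_reals all_analysis.
From mathcomp Require Import complex.
Import GRing.Theory Num.Theory numFieldNormedType.Exports.
Set Implicit Arguments. Unset Strict Implicit. Unset Printing Implicit Defensive.
Local Open Scope ring_scope.
Local Open Scope classical_set_scope.

(* The complex plane as a (complete) normed space over itself. *)
Notation Cplx R := ((R[i])^o).

Definition is_domain (R : realType) (U : set (Cplx R)) : Prop :=
  open U /\ connected U /\ U !=set0.

Definition holomorphic_on (R : realType) (U : set (Cplx R)) (f : Cplx R -> Cplx R) : Prop :=
  forall x, U x -> derivable f x 1.

Definition nowhere_vanishing_on (R : realType) (U : set (Cplx R)) (f : Cplx R -> Cplx R) : Prop :=
  forall x, U x -> f x != 0.

Definition dual_log_deriv (R : realType) (f : Cplx R -> Cplx R) (x : Cplx R) : Cplx R :=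
  x * derive1 f x / f x.

Definition period2_orbit (R : realType) (U : set (Cplx R)) (f1 f2 : Cplx R -> Cplx R) : Prop :=
  [/\ holomorphic_on U f1 /\ holomorphic_on U f2,
      nowhere_vanishing_on U f1 /\ nowhere_vanishing_on U f2,
      (forall x, U x -> dual_log_deriv f1 x = f2 x) &
      (forall x, U x -> dual_log_deriv f2 x = f1 x)].

Definition nondegenerate_on (R : realType) (U : set (Cplx R)) (f1 f2 : Cplx R -> Cplx R) : Prop :=
  ~ (forall x, U x -> f1 x = f2 x).

(** With f1 x = a x / (1 - a x) and f2 x = 1 / (1 - a x) we have f2 = f1 + 1,
    so f1 and f2 share the derivative a / (1 - a x)^2, and x times this
    derivative is exactly f1 x * f2 x.  Hence A[f1] = f1 f2 / f1 = f2 and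
    A[f2] = f1 f2 / f2 = f1, while f2 - f1 = 1 rules out f1 = f2. *)
From mathcomp Require Import all_boot all_order all_algebra.
From mathcomp Require Import all_classical all_reals all_analysis.
From mathcomp Require Import complex ring.
Import GRing.Theory Num.Theory numFieldNormedType.Exports.
Set Implicit Arguments. Unset Strict Implicit. Unset Printing Implicit Defensive.
Local Open Scope ring_scope.
Local Open Scope classical_set_scope.

Section MoebiusAlgebra.
Variables (F : fieldType) (a x : F).
Hypothesis nz : 1 - a * x != 0.

Lemma inv_one_sub_mul_subr : 1 / (1 - a * x) - a * x / (1 - a * x) = 1.
Proof. by field. Qed.

Lemma deriv_mul_div_one_sub_mul :
  a * x * (a / (1 - a * x) ^+ 2) + (1 - a * x)^-1 * a = a / (1 - a * x) ^+ 2.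
Proof. by field. Qed.

Lemma mul_deriv_inv_one_sub_mul :
  x * (a / (1 - a * x) ^+ 2) = a * x / (1 - a * x) * (1 / (1 - a * x)).
Proof. by field. Qed.

End MoebiusAlgebra.

Section MoebiusDerivatives.
Variables (K : numFieldType) (a x : K^o).
Hypothesis nz : 1 - a * x != 0.

Lemma is_derive_scalel : is_derive x 1 (fun y : K^o => a * y) a.
Proof. exact: (is_derive_eq (is_deriveZ a (is_derive_id x 1))) (mulr1 a). Qed.

Lemma is_derive_one_sub_mul : is_derive x 1 (fun y : K^o => 1 - a * y) (- a).
Proof.
by have := is_deriveB (is_derive_cst (1 : K^o) x 1) is_derive_scalel; rewrite sub0r.
Qed.

Lemma is_derive_inv_one_sub_mul :
  is_derive x 1 (fun y : K^o => (1 - a * y)^-1) (a / (1 - a * x) ^+ 2).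
Proof.
have dg := is_derive_one_sub_mul.
have g_derivable : derivable (fun y : K^o => 1 - a * y) x 1 by exact: ex_derive.
apply: DeriveDef; first exact: derivableV.
rewrite deriveV // derive_val scaleNr scalerN opprK.
exact: mulrC.
Qed.

Lemma is_derive_div_one_sub_mul :
  is_derive x 1 (fun y : K^o => 1 / (1 - a * y)) (a / (1 - a * x) ^+ 2).
Proof.
under eq_fun do rewrite mul1r.
exact: is_derive_inv_one_sub_mul.
Qed.

Lemma is_derive_mul_div_one_sub_mul :
  is_derive x 1 (fun y : K^o => a * y / (1 - a * y)) (a / (1 - a * x) ^+ 2).
Proof.
apply: (is_derive_eq (is_deriveM is_derive_scalel is_derive_inv_one_sub_mul)).
exact: deriv_mul_div_one_sub_mul.
Qed.

End MoebiusDerivatives.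

Lemma dual_log_deriv_is_derive (R : realType) (f : Cplx R -> Cplx R) (x df : Cplx R) :
  is_derive x 1 f df -> dual_log_deriv f x = x * df / f x.
Proof. by move=> d; rewrite /dual_log_deriv derive1E derive_val. Qed.

Theorem proposition3p1 (R : realType) (a : Cplx R) (U : set (Cplx R)) :
  a != 0 ->
  is_domain U ->
  ~ U 0 ->
  (forall x, U x -> 1 - a * x != 0) ->
  nowhere_vanishing_on U (fun x => a * x / (1 - a * x)) ->
  nowhere_vanishing_on U (fun x => 1 / (1 - a * x)) ->
  period2_orbit U (fun x => a * x / (1 - a * x)) (fun x => 1 / (1 - a * x)) /\
  nondegenerate_on U (fun x => a * x / (1 - a * x)) (fun x => 1 / (1 - a * x)).
Proof.
move=> _ [_ [_ [x0 Ux0]]] _ nz nv1 nv2.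
split; last first.
  move=> /(_ x0 Ux0) f1_eq_f2.
  have := inv_one_sub_mul_subr (nz x0 Ux0).
  by rewrite f1_eq_f2 subrr => /esym/eqP; rewrite oner_eq0.
split.
- split=> x Ux.
    by have := is_derive_mul_div_one_sub_mul (nz x Ux) => ?; exact: ex_derive.
  by have := is_derive_div_one_sub_mul (nz x Ux) => ?; exact: ex_derive.
- by split.
- move=> x Ux; rewrite (dual_log_deriv_is_derive (is_derive_mul_div_one_sub_mul (nz x Ux))).
  by rewrite (mul_deriv_inv_one_sub_mul (nz x Ux)) mulrAC divff ?mul1r // nv1.
- move=> x Ux; rewrite (dual_log_deriv_is_derive (is_derive_div_one_sub_mul (nz x Ux))).
  by rewrite (mul_deriv_inv_one_sub_mul (nz x Ux)) mulfK // nv2.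
Qed.
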